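(* Let $\mathcal{S}_1,\mathcal{S}_2\in\mathfrak{P}(X)$ with $\mathcal{S}_1\preceq\mathcal{S}_2$. Then for all $(S_1,H_1)\in\mathcal{S}_1$ and $(S_2,H_2)\in\mathcal{S}_2$, if $(S_2,H_2)<(S_1,H_1)$ then $(S_2,H_2)\in\mathcal{S}_1$, $H_2=\emptyset$ and $H_1=S_2$.
   Context: Let $X$ be a finite non-empty set. A set pair system on $X$ is a set of ordered pairs $(S,H)$ of subsets of $X$ with $S\ne\emptyset$ and $S\cap H=\emptyset$. On set pairs, $(S_1,H_1)\le(S_2,H_2)$ iff they are equal or one of: $S_1\cup H_1\subseteq S_2$; $S_1\cup H_1\subseteq H_2$; $S_1\subsetneq S_2$ and $H_1=H_2\ne\emptyset$; and $<$ means $\le$ and distinct. For set pair systems, $\mathcal{S}_1\preceq\mathcal{S}_2$ iff (SP1) for every $(S_1,H_1)\in\mathcal{S}_1$ there is $(S_2,H_2)\in\mathcal{S}_2$ with $(S_1,H_1)\le(S_2,H_2)$, and (SP2) for every $(S_2,H_2)\in\mathcal{S}_2$ with $H_2\ne\emptyset$, if some $(S_1,H_1)\in\mathcal{S}_1$ has $H_1=H_2$ then some such $(S_1,H_1)$ satisfies $(S_1,H_1)\le(S_2,H_2)$. A polestar system is a set pair system $\mathcal{S}$ with (PL1) $\mathcal{P}(\mathcal{S})=\{S:(S,H)\in\mathcal{S}\}$ is a partition of $X$; (PL2) distinct $(S,H),(S',H')\in\mathcal{S}$ have $S\ne S'$; (PL3) for each $(S,H)\in\mathcal{S}$ with $H\ne\emptyset$,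 $(H,\emptyset)\in\mathcal{S}$ and there is exactly one $(S',H')\in\mathcal{S}$ with $(S',H')\ne(S,H)$ and $H'=H$. $\mathfrak{P}(X)$ denotes the set of polestar systems on $X$. *)

From mathcomp Require Import all_boot.
Set Implicit Arguments. Unset Strict Implicit. Unset Printing Implicit Defensive.

Section SetPairs.
Variable X : finType.

Definition spair := ({set X} * {set X})%type.

Definition is_sps (S : {set spair}) : Prop :=
  forall p, p \in S -> p.1 != set0 /\ [disjoint p.1 & p.2].

Definition sp_le (p q : spair) : Prop :=
  p = q \/
  (p.1 :|: p.2) \subset q.1 \/
  (p.1 :|: p.2) \subset q.2 \/
  (p.1 \proper q.1 /\ p.2 = q.2 /\ q.2 != set0).

Definition sp_lt (p q : spair) : Prop := sp_le p q /\ p <> q.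

Definition sps_le (S1 S2 : {set spair}) : Prop :=
  (forall p1, p1 \in S1 -> exists2 p2, p2 \in S2 & sp_le p1 p2) /\
  (forall p2, p2 \in S2 -> p2.2 != set0 ->
     (exists2 p1, p1 \in S1 & p1.2 = p2.2) ->
     exists2 p1, p1 \in S1 & p1.2 = p2.2 /\ sp_le p1 p2).

Definition firsts (S : {set spair}) : {set {set X}} := [set p.1 | p in S].

Definition is_polestar (S : {set spair}) : Prop :=
  is_sps S /\
  partition (firsts S) [set: X] /\
  (forall p q, p \in S -> q \in S -> p <> q -> p.1 <> q.1) /\
  (forall p, p \in S -> p.2 != set0 ->
     (p.2, set0) \in S /\
     exists! q, q \in S /\ q <> p /\ q.2 = p.2).

End SetPairs.

From mathcomp Require Import all_boot.

Set Implicit Arguments.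
Unset Strict Implicit.
Unset Printing Implicit Defensive.

(* A pair (S, H) of S1 lies below some pair of S2 (SP1), and each clause of <= puts S inside a
   single block of P(S2): inside S', or inside H', itself a block because (H', {}) is in S2.
   Hence a block of P(S2) contained in S equals S.  For (S2, H2) < (S1, H1) this forces S1 = S2
   in the clauses S2 u H2 <= S1 and S2 < S1, contradicting strictness (in the first one, the same
   argument applied to (S1, H1) shows H1 = {}); in the clause S2 u H2 <= H1 it gives H1 = S2,
   so (S2, H2) is the pair (H1, {}) of S1. *)

Section PolestarSystems.
Variable X : finType.
Implicit Types (S : {set spair X}) (p q r : spair X).

Lemma sps_first_neq0 S p : is_sps S -> p \in S -> p.1 != set0.
Proof. by move=> HS /HS []. Qed.

Lemma sps_second_eq0 S p : is_sps S -> p \in S -> p.2 \subset p.1 -> p.2 = set0.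
Proof.
move=> HS /HS [_ disj12] sub21; apply/eqP.
by rewrite (eq0_subset p.1) sub21 subsetC -disjoints_subset.
Qed.

Lemma polestar_pole S p : is_polestar S -> p \in S -> p.2 != set0 -> (p.2, set0) \in S.
Proof. by move=> [_ [_ [_ PL3]]] /PL3 PL3p /PL3p []. Qed.

Lemma polestar_meet_eq S p q x :
  is_polestar S -> p \in S -> q \in S -> x \in p.1 -> x \in q.1 -> p = q.
Proof.
move=> [_ [/and3P [_ triv _] [PL2 _]]] pS qS xp xq.
case: (eqVneq p q) => // /eqP /(PL2 _ _ pS qS) /eqP neq_pq.
have /disjoint_setI0 /setP /(_ x) :=
  trivIsetP triv _ _ (imset_f _ pS) (imset_f _ qS) neq_pq.
by rewrite !inE xp xq.
Qed.

Lemma polestar_sub_eq S p q : is_polestar S -> p \in S -> q \in S ->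
  p.1 \subset q.1 -> p = q.
Proof.
move=> PS pS qS sub_pq.
have /set0Pn [x xp] := sps_first_neq0 PS.1 pS.
exact: polestar_meet_eq PS pS qS xp (subsetP sub_pq x xp).
Qed.

Lemma sp_le_polestar S p q : is_polestar S -> q \in S -> sp_le p q ->
  p = q \/ exists2 r, r \in S & (p.1 :|: p.2 \subset r.1) || (p.1 \proper r.1).
Proof.
move=> PS qS [-> | [sub | [sub | [prop _]]]]; [by left | | | ]; right.
- by exists q; rewrite ?sub.
- have [q2_0 | q2_neq0] := eqVneq q.2 set0.
    by exists q; rewrite // (subset_trans sub) // q2_0 sub0set.
  by exists (q.2, set0); rewrite ?sub ?polestar_pole.
- by exists q; rewrite ?prop ?orbT.
Qed.

Lemma sps_le_first_sub S1 S2 p : is_polestar S2 -> sps_le S1 S2 -> p \in S1 ->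
  exists2 r, r \in S2 & p.1 \subset r.1.
Proof.
move=> PS2 [SP1 _] /SP1 [q qS2 le_pq].
have [-> | [r rS2 /orP [sub | /proper_sub sub]]] := sp_le_polestar PS2 qS2 le_pq.
- by exists q.
- by exists r; rewrite // (subset_trans _ sub) ?subsetUl.
- by exists r.
Qed.

Lemma sps_le_first_eq S1 S2 p q : is_polestar S2 -> sps_le S1 S2 ->
  p \in S1 -> q \in S2 -> q.1 \subset p.1 -> p.1 = q.1.
Proof.
move=> PS2 le12 pS1 qS2 sub_qp.
have [r rS2 sub_pr] := sps_le_first_sub PS2 le12 pS1.
have eq_qr := polestar_sub_eq PS2 qS2 rS2 (subset_trans sub_qp sub_pr).
by apply/eqP; rewrite eqEsubset sub_qp eq_qr sub_pr.
Qed.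

Lemma sps_le_subU_first_eq S1 S2 p q : is_polestar S1 -> is_polestar S2 ->
  sps_le S1 S2 -> p \in S1 -> q \in S2 -> q.1 :|: q.2 \subset p.1 -> p = q.
Proof.
move=> PS1 PS2 le12 pS1 qS2; rewrite subUset => /andP [sub_q1 sub_q2].
have eq1 := sps_le_first_eq PS2 le12 pS1 qS2 sub_q1.
have q2_0 : q.2 = set0 by apply: sps_second_eq0 PS2.1 qS2 _; rewrite -eq1.
suff p2_0 : p.2 = set0 by rewrite [p]surjective_pairing [q]surjective_pairing eq1 p2_0 q2_0.
have [r rS2 le_pr] := le12.1 _ pS1.
case: (sp_le_polestar PS2 rS2 le_pr) => [eq_pr | [t tS2 sub_t]].
  have eq_qr : q = r by apply: polestar_sub_eq PS2 qS2 rS2 _; rewrite -eq_pr eq1.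
  by rewrite eq_pr -eq_qr.
have eq_qt : q = t.
  apply: polestar_sub_eq PS2 qS2 tS2 _; rewrite -eq1.
  by case/orP: sub_t => [/(subset_trans (subsetUl _ _)) | /proper_sub].
rewrite -eq_qt -eq1 subUset subxx properE subxx andbF orbF /= in sub_t.
exact: sps_second_eq0 PS1.1 pS1 sub_t.
Qed.

Lemma sps_le_subU_second_eq S1 S2 p q : is_polestar S1 -> is_polestar S2 ->
  sps_le S1 S2 -> p \in S1 -> q \in S2 -> q.1 :|: q.2 \subset p.2 ->
  q = (p.2, set0) /\ (p.2, set0) \in S1.
Proof.
move=> PS1 PS2 le12 pS1 qS2; rewrite subUset => /andP [sub_q1 sub_q2].
have p2_neq0 : p.2 != set0.
  apply: contraNneq (sps_first_neq0 PS2.1 qS2) => p2_0.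
  by rewrite -subset0 -p2_0.
have poleS1 := polestar_pole PS1 pS1 p2_neq0.
have eq_pole := sps_le_first_eq PS2 le12 poleS1 qS2 sub_q1.
have q2_0 : q.2 = set0 by apply: sps_second_eq0 PS2.1 qS2 _; rewrite -eq_pole.
by rewrite [q]surjective_pairing -eq_pole q2_0.
Qed.

End PolestarSystems.

Theorem mainTheorem6 (X : finType) (S1 S2 : {set spair X}) :
  [set: X] != set0 ->
  is_polestar S1 -> is_polestar S2 -> sps_le S1 S2 ->
  forall p1 p2, p1 \in S1 -> p2 \in S2 -> sp_lt p2 p1 ->
    p2 \in S1 /\ p2.2 = set0 /\ p1.2 = p2.1.
Proof.
move=> _ PS1 PS2 le12 p1 p2 p1S1 p2S2 [[eq21 | [sub | [sub | [prop _]]]] neq21].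
- by case: neq21.
- by case: neq21; rewrite (sps_le_subU_first_eq PS1 PS2 le12 p1S1 p2S2 sub).
- by have [-> ->] := sps_le_subU_second_eq PS1 PS2 le12 p1S1 p2S2 sub.
- have eq1 := sps_le_first_eq PS2 le12 p1S1 p2S2 (proper_sub prop).
  by rewrite eq1 properE subxx andbF in prop.
Qed.
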